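(* Let $\mathcal H$ be a Hilbert space, $K$ a compact operator on $\mathcal H$, and $W:D(W)\to\mathcal H$ a closed bijective operator with dense domain (so $W^{-1}$ is bounded and injective with dense range). Assume $W^{-1}KW$ (on $D(W)$) has a bounded closure $B$ which is compact. Then $\sigma(B)=\sigma(K)$. *)

From HB Require Import structures.
From mathcomp Require Import all_boot all_order all_algebra.
From mathcomp Require Import all_classical all_reals all_analysis.
From mathcomp Require Import complex.
Set Implicit Arguments. Unset Strict Implicit. Unset Printing Implicit Defensive.
Import Order.TTheory GRing.Theory Num.Theory.
Import numFieldNormedType.Exports.
Local Open Scope classical_set_scope.
Local Open Scope ring_scope.

Section Defs.
Context (C : numClosedFieldType) (H : normedModType C).

(* ip is an inner product on H (linear in the first argument, conjugate
   symmetric) inducing the norm of H:  <x,x> = |x|^2.  Together with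
   completeness of H this makes H a Hilbert space. *)
Definition is_inner_product (ip : H -> H -> C) : Prop :=
  [/\ forall (a : C) (x y z : H), ip (a *: x + y) z = a * ip x z + ip y z,
      forall x y : H, ip y x = (ip x y)^* &
      forall x : H, ip x x = `|x| ^+ 2].

Definition compact_operator (T : H -> H) : Prop :=
  compact (closure (T @` [set x : H | `|x| <= 1])).

Definition lin_subspace (D : set H) : Prop :=
  D 0 /\ forall (a : C) (x y : H), D x -> D y -> D (a *: x + y).

Definition linear_on (D : set H) (W : H -> H) : Prop :=
  forall (a : C) (x y : H), D x -> D y -> W (a *: x + y) = a *: W x + W y.

Definition op_graph (D : set H) (W : H -> H) : set (H * H) :=
  [set p | D p.1 /\ p.2 = W p.1].

(* graph of the operator W^{-1} K W, with domain D(W)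
   (W : D -> H being bijective, W^{-1} is defined on all of H) *)
Definition conj_graph (D : set H) (W K : H -> H) : set (H * H) :=
  [set p | [/\ D p.1, D p.2 & W p.2 = K (W p.1)]].

Definition spectrum (T : H -> H) : set C :=
  [set l | ~ exists S : {linear H -> H}, [/\ continuous S,
       forall x, S (T x - l *: x) = x & forall x, T (S x) - l *: S x = x]].
End Defs.

(* Choose a linear right inverse T of W: it is injective, its range is the
   dense domain D, and the hypothesis on the closure of the graph of W^-1 K W
   gives B T = T K, hence (B - l) T = T (K - l).  So if K - l has a bounded
   inverse, B - l has dense range, and if B - l has one, K - l is injective.
   For compact operators the Fredholm alternative turns either property into
   bounded invertibility; it is proved below from the Riesz lemma.  At l = 0
   invertibility of a compact operator makes the identity compact, and
   C - 0 = (C + id) - 1 reduces to l = 1. *)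

From HB Require Import structures.
From mathcomp Require Import all_boot all_order all_algebra.
From mathcomp Require Import all_classical all_reals all_analysis.
From mathcomp Require Import complex ring lra.
Set Implicit Arguments. Unset Strict Implicit. Unset Printing Implicit Defensive.
Import Order.TTheory GRing.Theory Num.Theory.
Import numFieldNormedType.Exports.
Local Open Scope classical_set_scope.
Local Open Scope ring_scope.
Local Open Scope complex_scope.

(* Norms of normed R[i]-spaces are real elements of R[i]; [rnorm] takes them
   back to R, where lra and nra apply. *)
Definition rnorm (R : realType) (V : normedZmodType R[i]) (v : V) : R :=
  complex.Re `|v|.

Section RealNorm.
Variable R : realType.

Section Zmod.
Variable V : normedZmodType R[i].
Implicit Types u v : V.

Lemma rnormE v : `|v| = (rnorm v)%:C.
Proof. by rewrite /rnorm RRe_real ?normr_real. Qed.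

Lemma rnorm_ge0 v : 0 <= rnorm v.
Proof. by rewrite -ler0c -rnormE. Qed.

Lemma rnorm0 : rnorm (0 : V) = 0.
Proof. by rewrite /rnorm normr0. Qed.

Lemma rnorm_eq0 v : rnorm v = 0 -> v = 0.
Proof. by move=> v0; apply/normr0_eq0; rewrite rnormE v0. Qed.

Lemma rnorm_gt0 v : v != 0 -> 0 < rnorm v.
Proof. by move=> v0; rewrite -ltcR -rnormE normr_gt0. Qed.

Lemma rnormN v : rnorm (- v) = rnorm v.
Proof. by rewrite /rnorm normrN. Qed.

Lemma rdistC u v : rnorm (u - v) = rnorm (v - u).
Proof. by rewrite /rnorm distrC. Qed.

Lemma rnormD u v : rnorm (u + v) <= rnorm u + rnorm v.
Proof. by rewrite -lecR rmorphD /= -!rnormE ler_normD. Qed.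
End Zmod.

Lemma rnormZ (H : normedModType R[i]) a (v : H) :
  rnorm (a *: v) = rnorm a * rnorm v.
Proof. by apply: (@complexI R); rewrite rmorphM /= -!rnormE normrZ. Qed.

Lemma rnorm_real (c : R) : 0 <= c -> rnorm c%:C = c.
Proof. by move=> c0; apply: complexI; rewrite -rnormE ger0_norm // ler0c. Qed.

Lemma eventually_invS_lt (e : R) : 0 < e ->
  exists N, forall n, (N <= n)%N -> n.+1%:R^-1 < e.
Proof. by move=> e0; case: (near_infty_natSinv_lt (PosNum e0)) => N _ hN; exists N. Qed.
End RealNorm.

Section LinearMaps.
Variables (R : realType) (H : normedModType R[i]).
Implicit Types (f : H -> H) (M : set H).

Section Linear.
Variables (f : H -> H) (linf : linear f).

Lemma linear_fun0 : f 0 = 0.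
Proof. by have := zmod_morphism_linear linf 0 0; rewrite !subrr. Qed.

Lemma linear_funB x y : f (x - y) = f x - f y.
Proof. exact: (zmod_morphism_linear linf). Qed.

Lemma linear_funZ a x : f (a *: x) = a *: f x.
Proof. exact: (scalable_linear linf). Qed.

Lemma linear_iter k : linear (iter k f).
Proof. by elim: k => [|k IH] a x y //=; rewrite IH linf. Qed.

Lemma linear_sub_scale l : linear (fun x => f x - l *: x).
Proof.
move=> a x y; rewrite linf scalerDr scalerA mulrC -scalerA.
by rewrite opprD addrACA scalerBr.
Qed.

Lemma rnorm_iter_le (M : R) : 0 <= M -> (forall x, rnorm (f x) <= M * rnorm x) ->
  forall k x, rnorm (iter k f x) <= M ^+ k * rnorm x.
Proof.
move=> M0 fM; elim=> [|k IH] x /=; first by rewrite expr0 mul1r.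
by apply: (le_trans (fM _)); rewrite exprS -mulrA ler_wpM2l.
Qed.

Lemma rnorm_iter_ge (M : R) : 0 <= M -> (forall x, rnorm x <= M * rnorm (f x)) ->
  forall k x, rnorm x <= M ^+ k * rnorm (iter k f x).
Proof.
move=> M0 fM; elim=> [|k IH] x /=; first by rewrite expr0 mul1r.
by apply: (le_trans (IH _)); rewrite exprSr -mulrA ler_wpM2l ?exprn_ge0.
Qed.
End Linear.

Section Subspace.
Variables (M : set H) (subM : lin_subspace M).

Lemma lin_subspaceD x y : M x -> M y -> M (x + y).
Proof. by move=> Mx My; have := subM.2 1 x y Mx My; rewrite scale1r. Qed.

Lemma lin_subspaceZ a x : M x -> M (a *: x).
Proof. by move=> Mx; have := subM.2 a x 0 Mx subM.1; rewrite addr0. Qed.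

Lemma lin_subspaceB x y : M x -> M y -> M (x - y).
Proof. by move=> Mx My; rewrite -scaleN1r addrC; exact: subM.2. Qed.
End Subspace.

Lemma lin_subspace_ker f : linear f -> lin_subspace [set v | f v = 0].
Proof.
move=> linf; split=> [|a x y /= fx fy]; first exact: linear_fun0.
by rewrite linf fx fy scaler0 addr0.
Qed.

Lemma lin_subspace_range f : linear f -> lin_subspace (range f).
Proof.
move=> linf; split=> [|a _ _ [x _ <-] [y _ <-]]; first by exists 0; rewrite ?linear_fun0.
by exists (a *: x + y); rewrite ?linf.
Qed.

Lemma riesz_lemma M x (r : R) : lin_subspace M -> 0 < r ->
    (forall m, M m -> r <= rnorm (x - m)) ->
  exists c m0, [/\ M m0, rnorm c <= r^-1, rnorm (c *: (x - m0)) = 1 &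
    forall m, M m -> 1/2 <= rnorm (c *: (x - m0) - m)].
Proof.
move=> subM r0 far.
pose S := [set rnorm (x - m) | m in M].
have S0 : S (rnorm (x - 0)) by exists 0 => //; exact: subM.1.
have lbS : lbound S r by move=> _ [m Mm <-]; exact: far.
have infS0 : 0 < inf S by apply: lt_le_trans r0 (lb_le_inf (ex_intro _ _ S0) lbS).
have [_ [m0 Mm0 <-] near_inf] :=
  inf_adherent infS0 (conj (ex_intro _ _ S0) (ex_intro _ r lbS)).
set t := rnorm (x - m0) in near_inf *.
have rt : r <= t by exact: far.
have t0 : 0 < t by exact: lt_le_trans rt.
have ct : rnorm (t^-1)%:C = t^-1 by rewrite rnorm_real // invr_ge0 (ltW t0).
exists (t^-1)%:C, m0; split => //.
- by rewrite ct lef_pV2 ?posrE.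
- by rewrite rnormZ ct mulVf ?gt_eqF.
move=> m Mm.
have -> : (t^-1)%:C *: (x - m0) - m = (t^-1)%:C *: (x - (m0 + t%:C *: m)).
  by rewrite opprD addrA [RHS]scalerBr scalerA -rmorphM /= mulVf ?gt_eqF // scale1r.
have : inf S <= rnorm (x - (m0 + t%:C *: m)).
  apply: ge_inf; first by exists r.
  exists (m0 + t%:C *: m) => //.
  by apply: lin_subspaceD => //; exact: lin_subspaceZ.
rewrite rnormZ ct -(ler_pM2l t0) mulVKf ?gt_eqF //; lra.
Qed.
End LinearMaps.

Section CompactMaps.
Variables (R : realType) (H : normedModType R[i]).
Implicit Types f g : H -> H.

Definition seq_compact f := forall (x : nat -> H) (b : R),
  (forall n, rnorm (x n) <= b) ->
  exists w, forall e, 0 < e -> forall N, exists2 n, (N <= n)%N & rnorm (f (x n) - w) < e.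

Lemma continuous_rnorm_bounded (f : {linear H -> H}) : continuous f ->
  exists M, 0 < M /\ forall x, rnorm (f x) <= M * rnorm x.
Proof.
move=> /(_ 0) /continuous_linear_bounded /linear_boundedP [M [Mreal fM]].
have M1real : M + 1 \is Num.real by rewrite realD // real1.
have := fM (M + 1); rewrite ltrDl ltr01 -(RRe_real M1real) => /(_ isT) fM1.
exists (Num.max (complex.Re (M + 1)) 1); split; first by rewrite lt_max ltr01 orbT.
move=> x; apply: (@le_trans _ _ (complex.Re (M + 1) * rnorm x)).
  by rewrite -lecR rmorphM /= -!rnormE fM1.
by rewrite ler_wpM2r ?rnorm_ge0 // le_max lexx.
Qed.

Lemma rnorm_bounded_continuous (f : {linear H -> H}) (M : R) :
  (forall x, rnorm (f x) <= M * rnorm x) -> continuous f.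
Proof.
move=> fM; apply: bounded_linear_continuous; apply/linear_boundedP.
exists M%:C; split=> [|r Mr x]; first by apply/complex_realP; exists M.
rewrite !rnormE; apply: (@le_trans _ _ (M%:C * (rnorm x)%:C)).
  by rewrite -rmorphM lecR.
by rewrite ler_wpM2r ?ler0c ?rnorm_ge0 // ltW.
Qed.

Lemma compact_operator_seq_compact (f : {linear H -> H}) :
  compact_operator f -> seq_compact f.
Proof.
move=> cf x b xb.
set c := Num.max b 1.
have c0 : 0 < c by rewrite lt_max ltr01 orbT.
pose y n := c^-1%:C *: x n.
have y1 n : `|y n| <= 1.
  rewrite rnormE -(rmorph1 (real_complex R)) lecR rnormZ rnorm_real ?invr_ge0 ?(ltW c0) //.
  by rewrite mulrC ler_pdivrMr // mul1r (le_trans (xb n)) // le_max lexx.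
pose F := (fun n => f (y n)) @ \oo.
have Fball : F (closure (f @` [set x : H | `|x| <= 1])).
  by exists 0%N => // n _; apply: subset_closure; exists (y n); [exact: y1 | ].
have [p [_ clp]] := cf F _ Fball.
exists (c%:C *: p) => e e0 N.
have ec0 : 0 < (e / c)%:C by rewrite ltcR divr_gt0.
have FN : F [set v | exists2 n, (N <= n)%N & v = f (y n)] by exists N => // n /= Nn; exists n.
have [_ [[n Nn ->] pyn]] := clp _ _ FN (nbhsx_ballx p _ ec0).
exists n => //; move: pyn; rewrite -ball_normE /= rnormE ltcR => pyn.
have -> : f (x n) - c%:C *: p = c%:C *: (f (y n) - p).
  by rewrite [RHS]scalerBr /y [f (_ *: _)]linearZZ scalerA -rmorphM /= mulfV ?gt_eqF // scale1r.
by rewrite rnormZ rnorm_real ?(ltW c0) // rdistC -ltr_pdivlMl // mulrC.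
Qed.

Lemma seq_compact_id f g (M : R) : seq_compact f -> 0 < M ->
  (forall x, rnorm (g x) <= M * rnorm x) -> cancel g f -> seq_compact (@id H).
Proof.
move=> cf M0 gM gK x b xb.
have gxb n : rnorm (g (x n)) <= M * b by rewrite (le_trans (gM _)) // ler_pM2l.
have [w hw] := cf (g \o x) (M * b) gxb.
by exists w => e e0 N; have [n Nn] := hw e e0 N; rewrite /= gK; exists n.
Qed.

Lemma seq_compact_of_id f (M : R) : seq_compact (@id H) -> linear f -> 0 < M ->
  (forall x, rnorm (f x) <= M * rnorm x) -> seq_compact f.
Proof.
move=> cid linf M0 fM x b xb.
have [w hw] := cid _ _ xb.
exists (f w) => e e0 N; have [n Nn xnw] := hw _ (divr_gt0 e0 M0) N.
exists n => //; rewrite -(linear_funB linf); apply: le_lt_trans (fM _) _.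
by rewrite -ltr_pdivlMl // mulrC.
Qed.

Lemma seq_compact_not_separated f (x : nat -> H) (b e : R) : seq_compact f ->
  (forall n, rnorm (x n) <= b) -> 0 < e ->
  ~ (forall j k, (j < k)%N -> e <= rnorm (f (x j) - f (x k))).
Proof.
move=> cf xb e0 sep.
have [w hw] := cf _ _ xb.
have e2 : 0 < e / 2 by lra.
have [j _ jw] := hw _ e2 0%N.
have [k jk kw] := hw _ e2 j.+1.
have := sep j k jk; rewrite -(subrK w (f (x j))) -addrA.
by move/le_trans/(_ (rnormD _ _)); rewrite (rdistC w (f (x k))); lra.
Qed.
End CompactMaps.

Section Fredholm.
Variables (R : realType) (H : normedModType R[i]) (C : H -> H) (l : R[i]) (K0 : R).
Hypotheses (l_neq0 : l != 0) (linC : linear C) (compC : seq_compact C)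
  (K0_gt0 : 0 < K0) (boundC : forall x, rnorm (C x) <= K0 * rnorm x).

Let A x := C x - l *: x.
Let KA := K0 + rnorm l.

Let linA : linear A. Proof. exact: linear_sub_scale. Qed.

Let KA_gt0 : 0 < KA.
Proof. by rewrite /KA ltr_wpDr ?rnorm_ge0. Qed.

Let boundA x : rnorm (A x) <= KA * rnorm x.
Proof.
rewrite /A /KA mulrDl; apply: (le_trans (rnormD _ _)).
by rewrite rnormN rnormZ lerD.
Qed.

Lemma cluster_preimage (y w : H) (z : nat -> H) :
    (forall e, 0 < e -> exists n, rnorm (C (z n) - w) < e /\ rnorm (A (z n) - y) < e) ->
  A (l^-1 *: (w - y)) = y /\
  forall e, 0 < e -> exists n, rnorm (z n - l^-1 *: (w - y)) < e.
Proof.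
move=> zwy; set u := l^-1 *: (w - y).
have L0 : 0 < rnorm l^-1 by rewrite rnorm_gt0 ?invr_eq0.
have near_u e : 0 < e -> exists n, rnorm (z n - u) < e /\ rnorm (A (z n) - y) < e.
  move=> e0; set d := e / (2 * (rnorm l^-1 + 1)).
  have dE : d * (2 * (rnorm l^-1 + 1)) = e by rewrite divfK // gt_eqF //; lra.
  have d0 : 0 < d by rewrite divr_gt0 //; lra.
  have [n [Czn Azn]] := zwy d d0; exists n; split; last by nra.
  have -> : z n - u = l^-1 *: ((C (z n) - w) - (A (z n) - y)).
    have -> : C (z n) - w - (A (z n) - y) = l *: z n - (w - y).
      by rewrite /A opprB addrA addrC opprB !addrA subrK opprB addrA addrAC.
    by rewrite scalerBr scalerA mulVf // scale1r.
  rewrite rnormZ; apply: le_lt_trans (ler_wpM2l (ltW L0) (rnormD _ _)) _.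
  by rewrite rnormN; nra.
split; last by move=> e /near_u [n []]; exists n.
apply/eqP; rewrite -subr_eq0; apply/eqP/rnorm_eq0/le_anti.
rewrite rnorm_ge0 andbT; apply/ler_addgt0Pr => d d0; rewrite add0r.
have KA1 : 0 < KA + 1 by have := KA_gt0; lra.
have dK0 : 0 < d / (KA + 1) by rewrite divr_gt0.
have dKE : d / (KA + 1) * (KA + 1) = d by rewrite divfK // gt_eqF.
have [n [zu Azn]] := near_u _ dK0.
have -> : A u - y = A (u - z n) + (A (z n) - y) by rewrite (linear_funB linA) addrA subrK.
apply: (le_trans (rnormD _ _)); rewrite rdistC in zu.
have := le_trans (boundA (u - z n)) (ler_wpM2l (ltW KA_gt0) (ltW zu)); lra.
Qed.

Lemma far_images u v S : lin_subspace S -> S v -> S (A v) -> S (A u) ->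
  (forall m, S m -> 1/2 <= rnorm (u - m)) -> rnorm l / 2 <= rnorm (C u - C v).
Proof.
move=> subS Sv SAv SAu far; set m := l^-1 *: (l *: v + A v - A u).
have -> : C u - C v = l *: (u - m).
  rewrite [RHS]scalerBr /m scalerA mulfV // scale1r /A.
  by rewrite (addrC (l *: v)) subrK opprB addrA (addrC (l *: u)) subrK.
have Sm : S m.
  apply: (lin_subspaceZ subS); apply: (lin_subspaceB subS) => //.
  by apply: (lin_subspaceD subS) => //; exact: lin_subspaceZ.
by rewrite rnormZ; have := far m Sm; have := rnorm_gt0 l_neq0; nra.
Qed.

Lemma almost_kernel_unit (k : nat) :
    ~ (forall x, exists2 m, A m = 0 & rnorm (x - m) <= k.+1%:R * rnorm (A x)) ->
  exists z, [/\ rnorm z = 1, forall m, A m = 0 -> 1/2 <= rnorm (z - m) &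
    rnorm (A z) <= k.+1%:R^-1].
Proof.
move=> noM.
have [x farx] : exists x, forall m, A m = 0 -> k.+1%:R * rnorm (A x) < rnorm (x - m).
  apply: contrapT => nox; apply: noM => x; apply: contrapT => nom; apply: nox.
  exists x => m Am; rewrite ltNge; apply/negP => le; apply: nom; by exists m.
set a := rnorm (A x) in farx.
have a0 : 0 < a.
  rewrite lt_neqAle rnorm_ge0 andbT; apply/negP => /eqP a0.
  by have := farx x (rnorm_eq0 (esym a0)); rewrite -a0 mulr0 subrr rnorm0 ltxx.
have r0 : 0 < k.+1%:R * a by rewrite mulr_gt0.
have [c [m0 [Am0 cr cz far]]] :=
  riesz_lemma (lin_subspace_ker linA) r0 (fun m Am => ltW (farx m Am)).
exists (c *: (x - m0)); split => //.
rewrite (linear_funZ linA) (linear_funB linA) Am0 subr0 rnormZ.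
apply: le_trans (ler_wpM2r (rnorm_ge0 _) cr) _.
by rewrite invfM -mulrA mulVf ?gt_eqF // mulr1.
Qed.

Lemma bounded_below_mod_ker : exists M, 0 < M /\
  forall x, exists2 m, A m = 0 & rnorm (x - m) <= M * rnorm (A x).
Proof.
apply: contrapT => noM.
have [z hz] := choice (fun k => almost_kernel_unit (k := k) (fun hk => noM
  (ex_intro _ k.+1%:R (conj (ltr0Sn _ k) hk)))).
have z1 n : rnorm (z n) <= 1 by case: (hz n) => ->.
have [w hw] := compC z1.
have zw0 e : 0 < e -> exists n, rnorm (C (z n) - w) < e /\ rnorm (A (z n) - 0) < e.
  move=> e0; have [N hN] := eventually_invS_lt e0; have [n Nn Czn] := hw e e0 N.
  by exists n; split => //; rewrite subr0; case: (hz n) => _ _ /le_lt_trans; apply; exact: hN.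
have [Au0 near_u] := cluster_preimage zw0.
have [n zn] := near_u (1/2) ltac:(lra).
by case: (hz n) => _ /(_ _ Au0); lra.
Qed.

Lemma fredholm_range_closed y :
  (forall e, 0 < e -> exists z, rnorm (y - A z) < e) -> exists x, A x = y.
Proof.
move=> ydense; have [M [M0 hM]] := bounded_below_mod_ker.
have approx k : exists x,
    rnorm x <= M * (rnorm y + 1) /\ rnorm (y - A x) < k.+1%:R^-1.
  have [z yz] := ydense _ (ltac:(by rewrite invr_gt0 ltr0Sn) : 0 < k.+1%:R^-1).
  have [m Am zm] := hM z.
  exists (z - m); rewrite (linear_funB linA) Am subr0; split => //.
  apply: (le_trans zm); rewrite ler_wpM2l ?(ltW M0) //.
  have -> : A z = y - (y - A z) by rewrite opprB addrC subrK.
  apply: (le_trans (rnormD _ _)); rewrite rnormN lerD2l; apply/ltW/(lt_le_trans yz).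
  by rewrite invf_le1 ?ltr0Sn // ler1n.
have [x hx] := choice approx.
have [w hw] := compC (fun k => (hx k).1).
have xwy e : 0 < e -> exists n, rnorm (C (x n) - w) < e /\ rnorm (A (x n) - y) < e.
  move=> e0; have [N hN] := eventually_invS_lt e0; have [n Nn Cxn] := hw e e0 N.
  by exists n; split => //; rewrite rdistC (lt_trans (hx n).2) ?hN.
have [Au _] := cluster_preimage xwy.
by exists (l^-1 *: (w - y)).
Qed.

Lemma bounded_below_of_inj : (forall x, A x = 0 -> x = 0) ->
  exists M, 0 < M /\ forall x, rnorm x <= M * rnorm (A x).
Proof.
move=> injA; have [M [M0 hM]] := bounded_below_mod_ker; exists M; split => // x.
by have [m /injA -> ] := hM x; rewrite subr0.
Qed.

Lemma inj_of_surj : (forall y, exists x, A x = y) -> forall x, A x = 0 -> x = 0.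
Proof.
(* Otherwise the kernels of the powers of A increase strictly, and Riesz
   vectors in them have C-images that are rnorm l / 2 apart. *)
move=> surjA x0 Ax0; apply: contrapT => x0_neq0.
have x0_gt0 : 0 < rnorm x0 by rewrite rnorm_gt0 //; apply/eqP.
have [g Ag] := choice surjA.
pose N k := [set v | iter k A v = 0].
have subN k : lin_subspace (N k) := lin_subspace_ker (linear_iter linA k).
have AN k v : N k.+1 v -> N k (A v) by rewrite /N /= -iterSr.
have N_mono j k : (j <= k)%N -> N j `<=` N k.
  move=> jk v; rewrite /N /= => Njv; rewrite -(subnK jk) iterD Njv.
  exact: linear_fun0 (linear_iter linA _).
have unit_far k : exists z, [/\ rnorm z = 1, N k.+1 z &
    forall m, N k m -> 1/2 <= rnorm (z - m)].
  have Axk : iter k A (iter k g x0) = x0 by elim: k => // k IH; rewrite iterSr /= Ag.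
  set xk := iter k g x0 in Axk *.
  have KAk : 0 < KA ^+ k by rewrite exprn_gt0.
  have far m : N k m -> rnorm x0 / KA ^+ k <= rnorm (xk - m).
    rewrite /N /= => Nm; rewrite ler_pdivrMr // mulrC.
    rewrite -[x0 in rnorm x0]Axk -[iter k A xk]subr0 -Nm -(linear_funB (linear_iter linA k)).
    exact: rnorm_iter_le (ltW KA_gt0) boundA k _.
  have [c [m0 [Nm0 _ cz far_z]]] := riesz_lemma (subN k) (divr_gt0 x0_gt0 KAk) far.
  exists (c *: (xk - m0)); split => //; move: Nm0; rewrite /N /= => Nm0.
  rewrite (linear_funZ (linear_iter linA k)) (linear_funB (linear_iter linA k)).
  by rewrite Axk Nm0 subr0 (linear_funZ linA) Ax0 scaler0.
have [z hz] := choice unit_far.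
have z1 n : rnorm (z n) <= 1 by case: (hz n) => ->.
apply: (seq_compact_not_separated (e := rnorm l / 2) compC z1).
  by have := rnorm_gt0 l_neq0; lra.
move=> j k jk; rewrite rdistC; case: (hz k) => _ Nzk far_k; case: (hz j) => _ Nzj _.
apply: (far_images (subN k)) => //.
- exact: N_mono jk _ Nzj.
- exact: N_mono (ltnW jk) _ (AN _ _ Nzj).
- exact: AN.
Qed.

Lemma surj_of_inj : (forall x, A x = 0 -> x = 0) -> forall y, exists x, A x = y.
Proof.
(* Dually, y0 is at positive distance from the closed range of A, and as A is
   bounded below the ranges of the powers of A decrease strictly. *)
move=> injA y0; apply: contrapT => no_pre.
have [r [r0 far_y0]] : exists r, 0 < r /\ forall z, r <= rnorm (y0 - A z).
  apply: contrapT => nor; apply/no_pre/fredholm_range_closed => e e0.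
  apply: contrapT => noz; apply: nor; exists e; split => // z.
  by rewrite leNgt; apply/negP => ez; apply: noz; exists z.
have [M [M0 hM]] := bounded_below_of_inj injA.
pose Rg k := range (iter k A).
have subR k : lin_subspace (Rg k) := lin_subspace_range (linear_iter linA k).
have AR k v : Rg k v -> Rg k.+1 (A v) by case=> u _ <-; exists u.
have R_anti j k : (j <= k)%N -> Rg k `<=` Rg j.
  by move=> jk _ [v _ <-]; exists (iter (k - j) A v) => //; rewrite -iterD subnKC.
have unit_far k : exists z, [/\ rnorm z = 1, Rg k z &
    forall m, Rg k.+1 m -> 1/2 <= rnorm (z - m)].
  have Mk : 0 < M ^+ k by rewrite exprn_gt0.
  have far m : Rg k.+1 m -> r / M ^+ k <= rnorm (iter k A y0 - m).
    case=> v _ <-; rewrite iterSr -(linear_funB (linear_iter linA k)) ler_pdivrMr // mulrC.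
    exact: le_trans (far_y0 v) (rnorm_iter_ge (ltW M0) hM k _).
  have [c [m0 [[v0 _ <-] _ cz far_z]]] := riesz_lemma (subR k.+1) (divr_gt0 r0 Mk) far.
  exists (c *: (iter k A y0 - iter k.+1 A v0)); split => //.
  exists (c *: (y0 - A v0)) => //.
  by rewrite (linear_funZ (linear_iter linA k)) (linear_funB (linear_iter linA k)) iterSr.
have [z hz] := choice unit_far.
have z1 n : rnorm (z n) <= 1 by case: (hz n) => ->.
apply: (seq_compact_not_separated (e := rnorm l / 2) compC z1).
  by have := rnorm_gt0 l_neq0; lra.
move=> j k jk; case: (hz j) => _ _ far_j; case: (hz k) => _ Rzk _; case: (hz j) => _ Rzj _.
apply: (far_images (subR j.+1)) => //.
- exact: R_anti jk _ Rzk.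
- exact: (R_anti j.+1 k.+1 (ltnW jk) _ (AR _ _ Rzk)).
- exact: AR.
Qed.
End Fredholm.

Section Resolvent.
Variables (R : realType) (H : normedModType R[i]).
Implicit Types (T : H -> H) (l : R[i]).

Definition resolvent T : set R[i] := [set l | exists S : {linear H -> H},
  [/\ continuous S, forall x, S (T x - l *: x) = x & forall x, T (S x) - l *: S x = x]].

Lemma spectrumE T : spectrum T = ~` resolvent T.
Proof. by []. Qed.

Lemma resolvent_ext T T' l l' : (forall x, T x - l *: x = T' x - l' *: x) ->
  resolvent T l -> resolvent T' l'.
Proof. by move=> TT' [S [Sc ST TS]]; exists S; split=> // x; rewrite -TT'. Qed.

Lemma mem_resolvent T l (M : R) : linear T ->
    (forall x, rnorm x <= M * rnorm (T x - l *: x)) ->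
    (forall y, exists x, T x - l *: x = y) ->
  resolvent T l.
Proof.
move=> linT below surj; have linA := linear_sub_scale linT l.
have [g Ag] := choice surj.
have Ainj u v : T u - l *: u = T v - l *: v -> u = v.
  move=> Auv; apply/eqP; rewrite -subr_eq0; apply/eqP/rnorm_eq0/le_anti.
  rewrite rnorm_ge0 andbT (le_trans (below _)) //.
  by rewrite (linear_funB linA) Auv subrr rnorm0 mulr0.
have ling : linear g by move=> a u v; apply: Ainj; rewrite linA !Ag.
pose S : {linear H -> H} := HB.pack g (GRing.isLinear.Build _ _ _ _ g ling).
exists S; split=> [|x|x] /=; last exact: Ag.
- by apply: (@rnorm_bounded_continuous _ _ S M) => x /=; rewrite -{2}(Ag x).
- by apply: Ainj; rewrite Ag.
Qed.

Lemma compact_id_of_resolvent0 T : seq_compact T -> resolvent T 0 -> seq_compact (@id H).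
Proof.
move=> cT [S [Sc _ TS]]; have [M [M0 SM]] := continuous_rnorm_bounded Sc.
by apply: (seq_compact_id cT M0 SM) => x; have := TS x; rewrite scale0r subr0.
Qed.
End Resolvent.

Section FredholmAlternative.
Variables (R : realType) (H : normedModType R[i]).
Implicit Types (C : H -> H) (l : R[i]).

Definition compact_bounded C := linear C /\ seq_compact C /\
  exists2 M, 0 < M & forall x, rnorm (C x) <= M * rnorm x.

Lemma compact_bounded_linear (f : {linear H -> H}) :
  continuous f -> seq_compact f -> compact_bounded f.
Proof.
move=> contf compf; have [M [M0 fM]] := continuous_rnorm_bounded contf.
by split; [exact: linearP | split=> //; exists M].
Qed.

Lemma resolvent_of_inj_neq0 C l : l != 0 -> compact_bounded C ->
  (forall x, C x - l *: x = 0 -> x = 0) -> resolvent C l.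
Proof.
move=> l0 [linC [compC [M M0 boundC]]] injA.
have [M' [_ below]] := bounded_below_of_inj l0 linC compC M0 boundC injA.
exact: mem_resolvent linC below (surj_of_inj l0 linC compC M0 boundC injA).
Qed.

Lemma resolvent_of_dense_range_neq0 C l : l != 0 -> compact_bounded C ->
  (forall y e, 0 < e -> exists z, rnorm (y - (C z - l *: z)) < e) -> resolvent C l.
Proof.
move=> l0 cbC dense; apply: resolvent_of_inj_neq0 => //.
case: cbC => [linC [compC [M M0 boundC]]].
apply: (inj_of_surj l0 linC compC M0 boundC) => y.
exact: fredholm_range_closed l0 linC compC M0 boundC y (dense y).
Qed.

Lemma compact_bounded_shift C l : compact_bounded C -> (l = 0 -> seq_compact (@id H)) ->
  exists C' l', [/\ l' != 0, compact_bounded C' &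
    forall x, C' x - l' *: x = C x - l *: x].
Proof.
move=> cbC cid; have [l0|l0] := eqVneq l 0; last by exists C, l.
case: cbC => [linC [_ [M M0 boundC]]].
exists (fun x => C x + x), 1; split=> [||x]; last by rewrite l0 scale1r scale0r addrK subr0.
  exact: oner_neq0.
have linC1 : linear (fun x => C x + x) by move=> a x y; rewrite linC scalerDr addrACA.
have boundC1 x : rnorm (C x + x) <= (M + 1) * rnorm x.
  by rewrite mulrDl mul1r (le_trans (rnormD _ _)) // lerD2r.
have M1 : 0 < M + 1 by lra.
by split=> //; split; [exact: seq_compact_of_id (cid l0) linC1 M1 boundC1 | exists (M + 1)].
Qed.

Lemma resolvent_of_inj C l : compact_bounded C -> (l = 0 -> seq_compact (@id H)) ->
  (forall x, C x - l *: x = 0 -> x = 0) -> resolvent C l.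
Proof.
move=> cbC cid injA; have [C' [l' [l'0 cbC' shift]]] := compact_bounded_shift cbC cid.
apply: (resolvent_ext shift (resolvent_of_inj_neq0 l'0 cbC' _)) => x.
by rewrite shift; exact: injA.
Qed.

Lemma resolvent_of_dense_range C l : compact_bounded C -> (l = 0 -> seq_compact (@id H)) ->
  (forall y e, 0 < e -> exists z, rnorm (y - (C z - l *: z)) < e) -> resolvent C l.
Proof.
move=> cbC cid dense; have [C' [l' [l'0 cbC' shift]]] := compact_bounded_shift cbC cid.
apply: (resolvent_ext shift (resolvent_of_dense_range_neq0 l'0 cbC' _)) => y e e0.
by have [z yz] := dense y e e0; exists z; rewrite shift.
Qed.
End FredholmAlternative.

Section Intertwining.
Variables (R : realType) (H : normedModType R[i]) (K B T : H -> H).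
Hypotheses (cbK : compact_bounded K) (cbB : compact_bounded B) (linT : linear T)
  (injT : forall x, T x = 0 -> x = 0)
  (denseT : forall y e, 0 < e -> exists z, rnorm (y - T z) < e)
  (BT : forall x, B (T x) = T (K x)).

Let T_sub_scale l x : T (K x - l *: x) = B (T x) - l *: T x.
Proof. by rewrite (linear_funB linT) (linear_funZ linT) BT. Qed.

Lemma resolvent_intertwined_sub : resolvent K `<=` resolvent B.
Proof.
move=> l [S [Sc SK KS]].
apply: resolvent_of_dense_range => // [l0|y e e0].
  by apply: (compact_id_of_resolvent0 cbK.2.1); rewrite -l0; exists S.
by have [z yz] := denseT y e0; exists (T (S z)); rewrite -T_sub_scale KS.
Qed.

Lemma resolvent_intertwined_sup : resolvent B `<=` resolvent K.
Proof.
move=> l [S [Sc SB BS]].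
apply: resolvent_of_inj => // [l0|x Kx].
  by apply: (compact_id_of_resolvent0 cbB.2.1); rewrite -l0; exists S.
apply: injT; rewrite -(SB (T x)) -T_sub_scale Kx (linear_fun0 linT).
exact: (linear_fun0 (linearP S)).
Qed.

Theorem spectrum_intertwined : spectrum B = spectrum K.
Proof.
rewrite !spectrumE; congr (~` _); apply/seteqP; split.
- exact: resolvent_intertwined_sup.
- exact: resolvent_intertwined_sub.
Qed.
End Intertwining.

Lemma linear_inverse_on (R : realType) (H : normedModType R[i]) (D : set H) (W : H -> H) :
    lin_subspace D -> linear_on D W -> {in D &, injective W} ->
    (forall y, exists2 x, D x & W x = y) ->
  exists T : H -> H, [/\ linear T, forall y, D (T y), forall y, W (T y) = y &
    forall x, D x -> T (W x) = x].
Proof.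
move=> subD linW injW surjW.
have [T hT] := choice (fun y => let: ex_intro2 x Dx Wx := surjW y in ex_intro _ x (conj Dx Wx)).
have DT y : D (T y) := (hT y).1.
have WT y : W (T y) = y := (hT y).2.
have TW x : D x -> T (W x) = x by move=> Dx; apply: injW; rewrite ?inE ?WT.
exists T; split=> // a x y; apply: injW; rewrite ?inE ?WT ?linW ?WT //.
exact: subD.2.
Qed.

Theorem mainTheorem12 (R : realType) (H : completeNormedModType R[i])
  (ip : H -> H -> R[i]) (K : {linear H -> H}) (D : set H) (W : H -> H)
  (B : {linear H -> H}) :
  is_inner_product ip ->
  continuous K -> compact_operator K ->
  lin_subspace D -> closure D = setT -> linear_on D W ->
  closed (op_graph D W) ->
  {in D &, injective W} -> (forall y : H, exists2 x, D x & W x = y) ->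
  closure (conj_graph D W K) = op_graph setT B ->
  continuous B -> compact_operator B ->
  spectrum B = spectrum K.
Proof.
move=> _ contK compK subD denseD linW _ injW surjW graphB contB compB.
have [T [linT DT WT TW]] := linear_inverse_on subD linW injW surjW.
apply: (spectrum_intertwined
  (compact_bounded_linear contK (compact_operator_seq_compact compK))
  (compact_bounded_linear contB (compact_operator_seq_compact compB)) linT).
- by move=> x Tx0; rewrite -[x]WT Tx0 -{1}(linear_fun0 linT) WT.
- move=> y e e0; have : closure D y by rewrite denseD.
  have e0C : 0 < e%:C by rewrite ltcR.
  move=> /(_ _ (nbhsx_ballx y _ e0C)) [x [Dx yx]]; exists (W x).
  by move: yx; rewrite -ball_normE /= rnormE ltcR TW.
- move=> x; have : closure (conj_graph D W K) (T x, T (K x)).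
    by apply: subset_closure; split=> /=; rewrite ?WT.
  by rewrite graphB => -[_ /= ->].
Qed.
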